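(* Let $S=\{A,B\}$ with $A\ne B$ and let $s,s':I_m\to S$. If there exists $i\ge 1$ such that $m_A^{(i)}(s)\ne m_A^{(i)}(s')$, then $s$ and $s'$ are not mirrored. (Likewise with $B$ in place of $A$.)
   Context: $\mathscr{T}_m=\{\sigma\in\mathcal{S}_m \mid \exists t:\ \sigma(1)>\cdots>\sigma(t)=1,\ \sigma(t)<\cdots<\sigma(m)\}$, $\mathcal{S}_m$ acting on sequences $s:I_m\to S$ by $\sigma s=s\circ\sigma^{-1}$. Two sequences $s,s'$ are mirrored if for every $\sigma\in\mathscr{T}_m$ there is $\sigma'\in\mathscr{T}_m$ with $\sigma s=\sigma's'$, and for every $\tau'\in\mathscr{T}_m$ there is $\tau\in\mathscr{T}_m$ with $\tau's'=\tau s$. Spectrum sequence: for $s:I_m\to\{A,B\}$, $\Sigma(s)=(n_1,n_2,\ldots,n_{2t})$ is the sequence of run lengths of $s$, read left to right, where odd-indexed entries are lengths of maximal runs of $A$ and even-indexed entries of maximal runs of $B$, alternating; $n_1=0$ if $s(1)=B$, $n_{2t}=0$ if $s(m)=A$, and all other entries are positive. Set $\Sigma(s)(l)=0$ for $l\notin\{1,\ldots,2t\}$. For $i\in\{1,\ldots,2t\}$ define $e_i^{(0)}(s)=\Sigma(s)(i)$ and $e_i^{(j)}(s)=\Sigma(s)(i+j)+\Sigma(s)(i-j)$ for $j\ge1$. Let $m_A^{(1)}(s)=\max\{\Sigma(s)(2k+1)\mid k\ge 0\}$, $I_A^{(1)}(s)=\{2k+1\mid \Sigma(s)(2k+1)=m_A^{(1)}(s)\}$,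 and for $i>1$: $m_A^{(i)}(s)=\max\{e_l^{(i-1)}(s)\mid l\in I_A^{(i-1)}(s)\}$ if $I_A^{(i-1)}(s)\ne\emptyset$ and $0$ otherwise; $I_A^{(i)}(s)=\{l\in I_A^{(i-1)}(s)\mid e_l^{(i-1)}(s)=m_A^{(i)}(s)\text{ and }m_A^{(i)}(s)>0\}$. The quantities $m_B^{(i)}, I_B^{(i)}$ are defined analogously, with $m_B^{(1)}(s)=\max\{\Sigma(s)(2k)\mid k\ge1\}$ and $I_B^{(1)}(s)$ the set of even indices attaining it. *)

From HB Require Import structures.
From mathcomp Require Import all_boot all_order all_fingroup.
Set Implicit Arguments. Unset Strict Implicit. Unset Printing Implicit Defensive.

Inductive letter := A | B.
Definition letter_eqb (x y : letter) : bool :=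
  match x, y with A, A | B, B => true | _, _ => false end.
Lemma letter_eqP : Equality.axiom letter_eqb.
Proof. by case; case; constructor. Qed.
HB.instance Definition _ := hasDecEq.Build letter letter_eqP.

(* Sequences s : I_m -> S, with I_m = {1..m} rendered 0-based as 'I_m. *)
Definition sequence (m : nat) := 'I_m -> letter.

Definition act (m : nat) (sigma : 'S_m) (s : sequence m) : sequence m :=
  fun i => s ((sigma^-1)%g i).

Definition inT (m : nat) (sigma : 'S_m) : Prop :=
  exists t : 'I_m,
    [/\ nat_of_ord (sigma t) = 0,
        (forall i j : 'I_m, i < j -> j <= t -> sigma j < sigma i)
      & (forall i j : 'I_m, t <= i -> i < j -> sigma i < sigma j)].

Definition mirrored (m : nat) (s s' : sequence m) : Prop :=
  (forall sigma : 'S_m, inT sigma ->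
     exists2 sigma' : 'S_m, inT sigma' & act sigma s =1 act sigma' s') /\
  (forall tau' : 'S_m, inT tau' ->
     exists2 tau : 'S_m, inT tau & act tau' s' =1 act tau s).

Fixpoint runs (l : seq letter) : seq (letter * nat) :=
  match l with
  | [::] => [::]
  | x :: l' =>
      match runs l' with
      | (y, n) :: r => if x == y then (y, n.+1) :: r else (x, 1) :: (y, n) :: r
      | [::] => [:: (x, 1)]
      end
  end.

Definition spectrum_list (l : seq letter) : seq nat :=
  let r := runs l in
  let ns := map snd r in
  let ns1 := if r is (B, _) :: _ then 0 :: ns else ns in
  if l is x :: l' then (if last x l' == A then rcons ns1 0 else ns1) else ns1.

Definition spectrum (m : nat) (s : sequence m) : seq nat :=
  spectrum_list (map s (enum 'I_m)).

(* Sigma(s)(l), 1-indexed, 0 outside {1, ..., 2t}. *)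
Definition sig (m : nat) (s : sequence m) (l : nat) : nat :=
  if l is 0 then 0 else nth 0 (spectrum s) l.-1.

(* e_i^{(j)}(s). Truncated subtraction is harmless: i - j <= 0 gives index 0,
   where Sigma vanishes. *)
Definition e_ (m : nat) (s : sequence m) (i j : nat) : nat :=
  if j is 0 then sig s i else sig s (i + j) + sig s (i - j).

(* Parity selector: odd indices for A, even indices for B. *)
Definition parity_of (X : letter) : bool := if X is A then true else false.

Definition idx (m : nat) (s : sequence m) : seq nat := iota 1 (size (spectrum s)).

Definition m1 (X : letter) (m : nat) (s : sequence m) : nat :=
  \max_(l <- idx s | odd l == parity_of X) sig s l.

Definition I1 (X : letter) (m : nat) (s : sequence m) : seq nat :=
  [seq l <- idx s | (odd l == parity_of X) && (sig s l == m1 X s)].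

(* mI X s k = (m_X^{(k+1)}(s), I_X^{(k+1)}(s)). *)
Fixpoint mI (X : letter) (m : nat) (s : sequence m) (k : nat) : nat * seq nat :=
  match k with
  | 0 => (m1 X s, I1 X s)
  | k'.+1 =>
      let I := (mI X s k').2 in
      let mm := \max_(l <- I) e_ s l k in
      (mm, [seq l <- I | (e_ s l k == mm) && (0 < mm)])
  end.

Definition mX (X : letter) (m : nat) (s : sequence m) (i : nat) : nat := (mI X s i.-1).1.
Definition IX (X : letter) (m : nat) (s : sequence m) (i : nat) : seq nat := (mI X s i.-1).2.

From Pilot Require Import Defs.
From mathcomp Require Import all_boot all_order all_fingroup zify.
Set Implicit Arguments. Unset Strict Implicit. Unset Printing Implicit Defensive.

(* A permutation of T_m with minimum at t reads s outward from position t: at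
   every moment the positions read so far form an interval containing t.  Cut
   such a reading into consecutive blocks of letters X, other X, X, ... (the
   first one possibly empty).  If the first blocks have lengths m_X^{(1)}, ...,
   m_X^{(j)}, then block j can only use positions whose run lies at run distance
   exactly j from the run l of t, so its length is at most e_l^{(j)}, and hence
   at most m_X^{(j+1)}.  Conversely, reading outward from a run selected by all
   the sets I_X^{(i)}, one run distance at a time, realises the whole profile.
   So (m_X^{(i)})_i is the lexicographically largest block-length sequence of a
   reading of s; it only depends on the set of readings, which mirrored
   sequences share. *)

(* A word starting with B has n_1 = 0, so its first run has spectrum index 2. *)
Definition first_run (x : letter) : nat := if x is A then 1 else 2.

Definition run_shift (x y : letter) : nat := if (x, y) is (B, A) then 2 else 0.

(* The spectrum index of the run containing each position of a word. *)
Fixpoint run_index (w : seq letter) : seq nat :=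
  match w with
  | [::] => [::]
  | x :: w' => match w' with
               | [::] => [:: first_run x]
               | y :: _ => first_run x :: map (addn (run_shift x y)) (run_index w')
               end
  end.

Lemma run_index_cons2 x y w :
  run_index [:: x, y & w] = first_run x :: map (addn (run_shift x y)) (run_index (y :: w)).
Proof. by []. Qed.

Lemma run_index1 x : run_index [:: x] = [:: first_run x].
Proof. by []. Qed.

Arguments run_index : simpl never.

Lemma size_run_index w : size (run_index w) = size w.
Proof. by elim: w => [|x [|y w] IH] //; rewrite run_index_cons2 /= size_map IH. Qed.

Lemma nth_run_index0 x w : nth 0 (run_index (x :: w)) 0 = first_run x.
Proof. by case: w => [|y w]; rewrite ?run_index1 ?run_index_cons2. Qed.

Lemma nth_run_indexS w i : i.+1 < size w ->
  nth 0 (run_index w) i.+1 = nth 0 (run_index w) i + (nth A w i != nth A w i.+1).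
Proof.
elim: w i => [|x [|y w] IH] [|i] // Hi; rewrite run_index_cons2.
  by rewrite /= (nth_map 0) ?size_run_index // nth_run_index0; clear Hi IH; case: x; case: y.
rewrite [nth _ (_ :: _) i.+2]/= [nth _ (_ :: _) i.+1]/= !(nth_map 0) ?size_run_index //.
  by rewrite IH // addnA.
exact: ltnW.
Qed.

Lemma run_index_gt0 w i : i < size w -> 0 < nth 0 (run_index w) i.
Proof.
elim: i => [|i IH] Hi.
  by case: w Hi => [|x w] // _; rewrite nth_run_index0; case: x.
by rewrite nth_run_indexS // ltn_addr // IH // ltnW.
Qed.

Lemma odd_run_index w i : i < size w -> odd (nth 0 (run_index w) i) = (nth A w i == A).
Proof.
elim: i => [|i IH] Hi.
  by case: w Hi => [|x w] // _; rewrite nth_run_index0; case: x.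
rewrite nth_run_indexS // oddD IH ?(ltnW Hi) //.
by case: (nth A w i); case: (nth A w i.+1).
Qed.

Lemma count_run_index0 w : count (pred1 0) (run_index w) = 0.
Proof.
apply/eqP; rewrite -leqn0 leqNgt -has_count; apply/hasP => -[_ /(nthP 0) [i Hi <-]] /=.
by rewrite size_run_index in Hi; rewrite eqn0Ngt run_index_gt0.
Qed.

Lemma runs_cons x w : runs (x :: w) =
  match runs w with
  | (y, n) :: r => if x == y then (y, n.+1) :: r else (x, 1) :: (y, n) :: r
  | [::] => [:: (x, 1)]
  end.
Proof. by []. Qed.

Lemma runs1 x : runs [:: x] = [:: (x, 1)].
Proof. by []. Qed.

Arguments runs : simpl never.

Lemma runs_head y w : exists n r, runs (y :: w) = (y, n.+1) :: r.
Proof.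
elim: w y => [|z w IH] y; first by exists 0, [::].
have [n [r Hr]] := IH z; rewrite runs_cons Hr.
by case: (y =P z) => [->|_]; [exists n.+1, r | exists 0, ((z, n.+1) :: r)].
Qed.

(* The spectrum list without its trailing 0 (if any). *)
Definition spectrum_head (w : seq letter) : seq nat :=
  let r := runs w in if r is (B, _) :: _ then 0 :: map snd r else map snd r.

Lemma nth_spectrum_head w i : nth 0 (spectrum_list w) i = nth 0 (spectrum_head w) i.
Proof.
by case: w => [|x w] //; rewrite /spectrum_list; case: ifP => _ //; rewrite nth_rcons_default.
Qed.

Lemma count_addn2 v (l : seq nat) :
  count (pred1 v) (map (addn 2) l) = if v is v'.+2 then count (pred1 v') l else 0.
Proof.
rewrite count_map; case: v => [|[|v]]; last by apply: eq_count => a /=; rewrite !add2n.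
all: by elim: l => //= a l ->.
Qed.

Lemma nth_spectrum_list w v : 0 < v ->
  nth 0 (spectrum_list w) v.-1 = count (pred1 v) (run_index w).
Proof.
rewrite nth_spectrum_head.
elim: w v => [|x [|y w] IH] v Hv; first by rewrite nth_nil.
  by rewrite /spectrum_head runs1 run_index1; case: x; case: v Hv => [|[|[|v]]] //= _; rewrite nth_nil.
have [n [r Hr]] := runs_head y w.
have IHy u : 0 < u -> nth 0 (if y is B then 0 :: n.+1 :: map snd r else n.+1 :: map snd r) u.-1
                     = count (pred1 u) (run_index (y :: w)).
  by move=> Hu; rewrite -IH // /spectrum_head Hr; clear IH; case: y Hr.
rewrite /spectrum_head runs_cons Hr run_index_cons2.
clear IH; case: x; case: y Hr IHy => Hr IHy /=; rewrite ?(eq_map add0n) ?map_id -?IHy //;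
  try by case: v Hv => [|[|[|v]]].
rewrite count_addn2; case: v Hv => [|[|[|v]]] //= _.
  by rewrite count_run_index0.
by rewrite -(IHy v.+1).
Qed.

Section RunOf.
Variables (m : nat) (s : sequence m).

Definition word := map s (enum 'I_m).
Definition run_of (i : nat) : nat := nth 0 (run_index word) i.
Definition letter_at (i : nat) : letter := nth A word i.

Lemma size_word : size word = m.
Proof. by rewrite size_map size_enum_ord. Qed.

Lemma letter_atE (i : 'I_m) : letter_at i = s i.
Proof. by rewrite /letter_at /word (nth_map i) ?size_enum_ord // nth_ord_enum. Qed.

Lemma run_ofS i : i.+1 < m -> run_of i.+1 = run_of i + (letter_at i != letter_at i.+1).
Proof. by move=> Hi; rewrite /run_of nth_run_indexS ?size_word. Qed.

Lemma run_of_gt0 i : i < m -> 0 < run_of i.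
Proof. by move=> Hi; rewrite /run_of run_index_gt0 ?size_word. Qed.

Lemma odd_run_of (i : 'I_m) : odd (run_of i) = (s i == A).
Proof. by rewrite /run_of odd_run_index ?size_word // -/(letter_at i) letter_atE. Qed.

Lemma run_of_le i j : i <= j -> j < m -> run_of i <= run_of j.
Proof.
move=> Hij; elim: j Hij => [|j IH]; first by rewrite leqn0 => /eqP ->.
rewrite leq_eqVlt => /orP [/eqP -> //| Hij] Hj.
by rewrite run_ofS // (leq_trans (IH Hij (ltnW Hj))) ?leq_addr.
Qed.

Lemma run_of_lt (i j : 'I_m) : run_of i < run_of j -> i < j.
Proof. by apply: contraLR; rewrite -!leqNgt => /run_of_le->. Qed.

(* Consecutive positions lie in the same or in adjacent runs, so run indices
   satisfy a discrete intermediate value property. *)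
Lemma run_of_ivt_nat a b v : a <= b -> b < m -> run_of a <= v <= run_of b ->
  exists2 c, a <= c <= b & run_of c = v.
Proof.
move=> Hab; elim: b Hab => [|b IH].
  by rewrite leqn0 => /eqP -> _ Hv; exists 0 => //; apply/eqP; rewrite eqn_leq.
rewrite leq_eqVlt => /orP [/eqP <- | Hab] Hb Hv.
  by exists a; rewrite ?leqnn //; apply/eqP; rewrite eqn_leq.
case/andP: Hv => Hav Hvb; case: (leqP v (run_of b)) => Hv.
  have [c Hc <-] := IH Hab (ltnW Hb) (introT andP (conj Hav Hv)).
  by exists c => //; move: Hc; lia.
exists b.+1; first by rewrite leqnn ltnW.
by move: Hvb Hv; rewrite run_ofS //; case: (_ != _); lia.
Qed.

Lemma run_of_ivt (a b : 'I_m) v : a <= b -> run_of a <= v <= run_of b ->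
  exists c : 'I_m, [/\ a <= c, c <= b & run_of c = v].
Proof.
move=> Hab Hv; have [c /andP [Hac Hcb] Hc] := run_of_ivt_nat Hab (ltn_ord b) Hv.
by exists (Ordinal (leq_ltn_trans Hcb (ltn_ord b))).
Qed.

Lemma sig_card v : sig s v = #|[set i : 'I_m | run_of i == v]|.
Proof.
case: v => [|v].
  apply/esym/eqP; rewrite cards_eq0; apply/eqP/setP => i; rewrite !inE.
  by rewrite eqn0Ngt run_of_gt0.
rewrite /sig /spectrum nth_spectrum_list // cardE size_filter.
have -> : run_index (map s (enum 'I_m)) = map (fun i : 'I_m => run_of i) (enum 'I_m).
  apply: (@eq_from_nth _ 0); first by rewrite size_map size_run_index size_word size_enum_ord.
  move=> i; rewrite size_run_index size_word => Hi.
  by rewrite (nth_map (Ordinal Hi)) ?size_enum_ord // nth_enum_ord.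
rewrite count_map /enum_mem -enumT (eq_filter (a2 := predT)) // filter_predT.
by apply: eq_count => i; rewrite !inE.
Qed.

Lemma sig_gt0P v : reflect (exists i : 'I_m, run_of i = v) (0 < sig s v).
Proof.
rewrite sig_card card_gt0; apply: (iffP (set0Pn _)) => -[i].
  by rewrite inE => /eqP; exists i.
by move=> <-; exists i; rewrite inE.
Qed.

Lemma sig_run_of_gt0 (i : 'I_m) : 0 < sig s (run_of i).
Proof. by apply/sig_gt0P; exists i. Qed.

Lemma sig_default v : size (spectrum s) < v -> sig s v = 0.
Proof. by case: v => // v H; rewrite /sig nth_default. Qed.

Lemma run_of_le_size (i : 'I_m) : run_of i <= size (spectrum s).
Proof. by rewrite leqNgt; apply: contraTN (sig_run_of_gt0 i) => /sig_default ->. Qed.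

Lemma sig_convex a b c : a <= b <= c -> 0 < sig s a -> 0 < sig s c -> 0 < sig s b.
Proof.
case/andP=> Hab Hbc /sig_gt0P [i Hi] /sig_gt0P [k Hk]; apply/sig_gt0P.
case: (leqP i k) => Hik.
  have Hb : run_of i <= b <= run_of k by rewrite Hi Hk Hab.
  by have [c' [_ _ <-]] := run_of_ivt Hik Hb; exists c'.
have := run_of_le (ltnW Hik) (ltn_ord i); rewrite Hi Hk => Hca.
by exists i; rewrite Hi; apply/eqP; rewrite eqn_leq Hab (leq_trans Hbc).
Qed.

Lemma e_eq0S l j : 0 < sig s l -> 0 < j -> e_ s l j = 0 -> e_ s l j.+1 = 0.
Proof.
case: j => // j Hl _ /eqP; rewrite /= addn_eq0 => /andP [/eqP Hr /eqP Hl'].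
apply/eqP; rewrite addn_eq0 !eqn0Ngt; apply/andP; split; apply/negP => Hpos.
  suff: 0 < sig s (l + j.+1) by rewrite Hr.
  by apply: sig_convex Hl Hpos; rewrite leq_addr leq_add2l leqnSn.
have Hpos0 : 0 < l - j.+2 by case: (l - j.+2) Hpos.
suff: 0 < sig s (l - j.+1) by rewrite Hl'.
by apply: sig_convex Hpos Hl; rewrite leq_subr andbT; apply: leq_sub2l.
Qed.

End RunOf.

Lemma bigmax_attained (I : eqType) (r : seq I) (P : pred I) (F : I -> nat) :
  0 < \max_(i <- r | P i) F i ->
  exists i, [/\ i \in r, P i & F i = \max_(i <- r | P i) F i].
Proof.
elim: r => [|a r IH]; first by rewrite big_nil.
rewrite big_cons; case: ifP => Pa; last by move=> /IH [i [H1 H2 H3]]; exists i; rewrite inE H1 orbT.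
case: (leqP (F a) (\max_(i <- r | P i) F i)) => H.
  by move=> /IH [i [H1 H2 H3]]; exists i; rewrite inE H1 orbT.
by move=> _; exists a; rewrite inE eqxx Pa; split.
Qed.

Section Greedy.
Variables (X : letter) (m : nat) (s : sequence m).

(* [greedy_max j] and [greedy_set j] are m_X^{(j+1)}(s) and I_X^{(j+1)}(s). *)
Definition greedy_max j := (mI X s j).1.
Definition greedy_set j := (mI X s j).2.

(* [l] is the spectrum index of a run of X's (possibly the empty run n_1 or n_2t). *)
Definition Xrun l := (l \in idx s) && (odd l == parity_of X).

Lemma greedy_max0 : greedy_max 0 = \max_(l <- idx s | odd l == parity_of X) sig s l.
Proof. by []. Qed.

Lemma greedy_maxS j : greedy_max j.+1 = \max_(l <- greedy_set j) e_ s l j.+1.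
Proof. by []. Qed.

Lemma mem_greedy_set0 l : (l \in greedy_set 0) = Xrun l && (sig s l == greedy_max 0).
Proof. by rewrite /greedy_set /= /I1 mem_filter /Xrun andbC andbA. Qed.

Lemma greedy_setS j : greedy_set j.+1 =
  [seq l <- greedy_set j | (e_ s l j.+1 == greedy_max j.+1) && (0 < greedy_max j.+1)].
Proof. by []. Qed.

Lemma mem_greedy_setS j l : (l \in greedy_set j.+1) =
  [&& e_ s l j.+1 == greedy_max j.+1, 0 < greedy_max j.+1 & l \in greedy_set j].
Proof. by rewrite greedy_setS mem_filter andbA. Qed.

Lemma greedy_setP k l : l \in greedy_set k ->
  Xrun l /\ forall j, j <= k -> e_ s l j = greedy_max j.
Proof.
elim: k => [|k IH].
  by rewrite mem_greedy_set0 => /andP [Hl /eqP Hsig]; split => // j; rewrite leqn0 => /eqP ->.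
rewrite mem_greedy_setS => /and3P [/eqP Hk _ /IH [Hl Hj]]; split => // j.
by rewrite leq_eqVlt => /orP [/eqP -> //|]; apply: Hj.
Qed.

Lemma sig_le_greedy_max0 l : Xrun l -> sig s l <= greedy_max 0.
Proof. by case/andP => Hl Hp; rewrite greedy_max0 (leq_bigmax_seq (F := sig s) _ Hl Hp). Qed.

Lemma e_le_greedy_max j l : l \in greedy_set j -> e_ s l j.+1 <= greedy_max j.+1.
Proof. by move=> Hl; rewrite greedy_maxS (leq_bigmax_seq (F := fun l => e_ s l j.+1) _ Hl). Qed.

Lemma greedy_set_eq0 j : greedy_max j.+1 = 0 -> greedy_set j.+1 = [::].
Proof. by move=> H; rewrite greedy_setS H; elim: (greedy_set j) => //= l r ->; rewrite andbF. Qed.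

Lemma greedy_set_gt0 k : 0 < greedy_max k -> exists l, l \in greedy_set k.
Proof.
case: k => [|k].
  rewrite greedy_max0 => /bigmax_attained [l [Hl Hp Hsig]].
  by exists l; rewrite mem_greedy_set0 /Xrun Hl Hp Hsig greedy_max0 eqxx.
move=> Hk; have := Hk; rewrite greedy_maxS => /bigmax_attained [l [Hl _ He]].
by exists l; rewrite mem_greedy_setS Hl Hk greedy_maxS He eqxx.
Qed.

Lemma Xrun_range l : Xrun l -> 0 < l <= size (spectrum s).
Proof. by case/andP; rewrite /idx mem_iota add1n ltnS. Qed.

Lemma e_default l j : Xrun l -> size (spectrum s) < j -> e_ s l j = 0.
Proof.
move=> /Xrun_range Hl; case: j => [|j] //= Hj.
have -> : l - j.+1 = 0 by move: Hl Hj; lia.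
by rewrite sig_default // (leq_trans Hj) // leq_addl.
Qed.

(* A run that agrees with the greedy profile up to level k is either still
   selected at level k, or was dropped when the profile hit 0 and then stays at 0. *)
Lemma e_le_greedy_max_of_prefix l k : Xrun l -> 0 < sig s l ->
  (forall j, j < k -> e_ s l j = greedy_max j) -> e_ s l k <= greedy_max k.
Proof.
move=> Hl Hsig.
have selected k' : (forall j, j <= k' -> e_ s l j = greedy_max j) ->
    l \in greedy_set k' \/ (0 < k' /\ e_ s l k' = 0).
  elim: k' => [|k' IH] Heq.
    by left; rewrite mem_greedy_set0 Hl -(Heq 0) /=.
  have [Hin|[Hk' He]] := IH (fun j Hj => Heq j (leqW Hj)); last by right; split => //; apply: e_eq0S.
  case: (posnP (greedy_max k'.+1)) => Hm; first by right; rewrite Heq.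
  by left; rewrite mem_greedy_setS Heq // eqxx Hm.
case: k => [_|k Heq]; first exact: sig_le_greedy_max0.
have [Hin|[Hk He]] := selected k (fun j Hj => Heq j Hj); first exact: e_le_greedy_max.
by rewrite e_eq0S.
Qed.

Lemma greedy_tail_eq0 k l : 0 < sig s l -> l \in greedy_set k -> greedy_max k.+1 = 0 ->
  forall j, k < j -> e_ s l j = 0 /\ greedy_max j = 0.
Proof.
move=> Hsig Hl Hk; elim=> // j IH; rewrite ltnS leq_eqVlt => /orP [/eqP <- | Hkj].
  by split => //; apply/eqP; rewrite -leqn0 -Hk e_le_greedy_max.
have [He Hm] := IH Hkj; case: j Hkj IH He Hm => // j _ _ He Hm.
by rewrite e_eq0S // greedy_maxS greedy_set_eq0 // big_nil.
Qed.

Lemma greedy_profile_attained : 0 < greedy_max 0 ->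
  exists2 l, Xrun l & forall j, e_ s l j = greedy_max j.
Proof.
move=> Hm0.
have Hend : exists k, greedy_max k.+1 == 0.
  exists (size (spectrum s)); rewrite greedy_maxS -leqn0; apply/bigmax_leqP_seq => l Hl _.
  by have [Hx _] := greedy_setP Hl; rewrite e_default.
have [k /eqP Hk Hmin] := ex_minnP Hend.
have Hmk : 0 < greedy_max k.
  case: k Hk Hmin => // k _ Hmin; rewrite lt0n; apply/negP => /Hmin; lia.
have [l Hl] := greedy_set_gt0 Hmk; have [Hx Hpre] := greedy_setP Hl.
have Hsig : 0 < sig s l by rewrite -[sig s l]/(e_ s l 0) Hpre.
exists l => // j; case: (leqP j k) => Hj; first exact: Hpre.
by have [-> ->] := greedy_tail_eq0 Hsig Hl Hk Hj.
Qed.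

End Greedy.

Lemma Xrun_run_of X m (s : sequence m) (i : 'I_m) : s i = X -> Xrun X s (run_of s i).
Proof.
move=> Hi; rewrite /Xrun /idx mem_iota add1n ltnS run_of_gt0 // run_of_le_size odd_run_of Hi.
by case: X {Hi}.
Qed.

Definition block_start (p : nat -> nat) (j : nat) : nat := \sum_(j' < j) p j'.

Lemma block_startS p j : block_start p j.+1 = block_start p j + p j.
Proof. by rewrite /block_start big_ord_recr. Qed.

Lemma leq_block_start p j k : j <= k -> block_start p j <= block_start p k.
Proof.
move=> /subnK <-; elim: (k - j) => [|n IH]; first by rewrite add0n.
by rewrite addSn block_startS (leq_trans IH) ?leq_addr.
Qed.

Definition other (X : letter) : letter := if X is A then B else A.
Definition block_letter (X : letter) (j : nat) : letter := if odd j then other X else X.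

Section RunDist.
Variables (m : nat) (s : sequence m).

Definition run_dist (l : nat) (i : 'I_m) : nat := (run_of s i - l) + (l - run_of s i).

Lemma card_run_dist_eq l j : #|[set i : 'I_m | run_dist l i == j]| = e_ s l j.
Proof.
case: j => [|j].
  by rewrite /= sig_card; apply: eq_card => i; rewrite !inE /run_dist; apply/eqP/eqP; lia.
have -> : [set i : 'I_m | run_dist l i == j.+1] =
    [set i : 'I_m | run_of s i == l + j.+1] :|: [set i : 'I_m | run_of s i == l - j.+1].
  by apply/setP => i; rewrite !inE /run_dist; have := run_of_gt0 s (ltn_ord i); lia.
rewrite cardsU /= !sig_card.
suff -> : [set i : 'I_m | run_of s i == l + j.+1] :&: [set i : 'I_m | run_of s i == l - j.+1] = set0.
  by rewrite cards0 subn0.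
by apply/setP => i; rewrite !inE; apply/negP => /andP [/eqP -> /eqP]; lia.
Qed.

Lemma card_run_dist_lt l j : #|[set i : 'I_m | run_dist l i < j]| = block_start (e_ s l) j.
Proof.
elim: j => [|j IH].
  by rewrite /block_start big_ord0; apply/eqP; rewrite cards_eq0; apply/eqP/setP => i; rewrite !inE.
rewrite block_startS -IH -card_run_dist_eq -cardsUI.
suff -> : [set i : 'I_m | run_dist l i < j] :&: [set i : 'I_m | run_dist l i == j] = set0.
  by rewrite cards0 addn0; apply: eq_card => i; rewrite !inE ltnS leq_eqVlt orbC.
by apply/setP => i; rewrite !inE; apply/negP => /andP [H /eqP E]; move: H; rewrite E ltnn.
Qed.

Lemma block_letter_run_dist X l (i : 'I_m) : odd l = parity_of X ->
  s i = block_letter X (run_dist l i).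
Proof.
have oddD_dist : odd (run_of s i) = odd l (+) odd (run_dist l i).
  rewrite /run_dist; case: (leqP l (run_of s i)) => H.
    have -> : l - run_of s i = 0 by lia.
    by rewrite addn0 -{1}(subnKC H) oddD.
  have -> : run_of s i - l = 0 by lia.
  by rewrite add0n -{1}(subnKC (ltnW H)) oddD -addbA addbb addbF.
move=> Hl; move: oddD_dist; rewrite odd_run_of Hl /block_letter.
by case: (s i); case: X {Hl}; case: (odd _).
Qed.

Lemma adjacent_runs_neq (c1 c2 : 'I_m) : run_of s c2 = (run_of s c1).+1 -> s c1 != s c2.
Proof.
by move=> H; apply/eqP => E; move: (congr1 odd H) => /=; rewrite !odd_run_of E; case: (_ == A).
Qed.

End RunDist.

Definition blocks (X : letter) (m : nat) (u : sequence m) (p : nat -> nat) (k : nat) : Prop :=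
  forall j, j < k -> block_start p j + p j <= m /\
    forall i : 'I_m, block_start p j <= i < block_start p j + p j -> u i = block_letter X j.

Lemma act_perm m (sigma : 'S_m) (s : sequence m) (i : 'I_m) : Defs.act sigma s (sigma i) = s i.
Proof. by rewrite /Defs.act permK. Qed.

Lemma card_perm_lt m (sigma : 'S_m) n : n <= m -> #|[set i : 'I_m | sigma i < n]| = n.
Proof.
move=> Hn; have card_lt : #|[set q : 'I_m | q < n]| = n.
  have -> : [set q : 'I_m | q < n] = [set widen_ord Hn i | i : 'I_n].
    apply/setP => q; rewrite inE; apply/idP/imsetP => [Hq|[i _ ->]]; last exact: (ltn_ord i).
    by exists (Ordinal Hq) => //; apply: val_inj.
  by rewrite card_imset ?card_ord // => i j /(congr1 val) /= /val_inj.
rewrite -[RHS]card_lt -(card_preimset [set q : 'I_m | q < n] (@perm_inj _ sigma)).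
by apply: eq_card => i; rewrite !inE.
Qed.

Section VShaped.
Variables (m : nat) (sigma : 'S_m) (t : 'I_m).
Hypothesis Hdec : forall i j : 'I_m, i < j -> j <= t -> sigma j < sigma i.
Hypothesis Hinc : forall i j : 'I_m, t <= i -> i < j -> sigma i < sigma j.

Lemma V_convex (a b c : 'I_m) n :
  a <= c -> c <= b -> sigma a < n -> sigma b < n -> sigma c < n.
Proof.
move=> Hac Hcb Ha Hb; case: (leqP c t) => Hct.
  have [<-//|Hac'] := eqVneq a c.
  by apply: ltn_trans (Hdec _ Hct) Ha; rewrite ltn_neqAle Hac' Hac.
have [->//|Hcb'] := eqVneq c b.
by apply: ltn_trans (Hinc (ltnW Hct) _) Hb; rewrite ltn_neqAle Hcb' Hcb.
Qed.

End VShaped.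

Section UpperBound.
Variables (X : letter) (m : nat) (s : sequence m) (sigma : 'S_m) (t : 'I_m).
Hypothesis sigma_t : nat_of_ord (sigma t) = 0.
Hypothesis Hdec : forall i j : 'I_m, i < j -> j <= t -> sigma j < sigma i.
Hypothesis Hinc : forall i j : 'I_m, t <= i -> i < j -> sigma i < sigma j.
Variables (p : nat -> nat) (k : nat).
Hypothesis Hblocks : blocks X (Defs.act sigma s) p k.+1.

Local Notation dist := (run_dist s (run_of s t)).
Local Notation start := (block_start p).

Definition read_before n := [set i : 'I_m | sigma i < n].
Definition within j := [set i : 'I_m | dist i < j].
Definition block j := [set i : 'I_m | start j <= sigma i < start j + p j].

Lemma letter_in_block j (i : 'I_m) : j <= k -> i \in block j -> s i = block_letter X j.
Proof. by rewrite inE -(act_perm sigma) => /Hblocks [_]; apply. Qed.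

(* If the first j blocks are read exactly at run distance < j, then block j
   lies at distance exactly j: a position of block j farther away would force
   two adjacent runs between it and t into block j, but their letters differ. *)
Lemma run_dist_block j (i : 'I_m) : j <= k -> read_before (start j) = within j ->
  i \in block j -> dist i = j.
Proof.
move=> Hj Hread Hi; have := Hi; rewrite inE => /andP [Hlo Hhi].
set bound := start j + p j in Hhi.
have far (c : 'I_m) : start j <= sigma c -> j <= dist c.
  move=> Hc; have : c \notin read_before (start j) by rewrite inE -leqNgt.
  by rewrite Hread inE -leqNgt.
have in_block (c : 'I_m) : j <= dist c -> sigma c < bound -> s c = block_letter X j.
  move=> Hc Hcb; apply: letter_in_block Hj _; rewrite inE Hcb andbT leqNgt; apply/negP => Hc'.
  have : c \in read_before (start j) by rewrite inE.
  by rewrite Hread inE ltnNge Hc.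
have adjacent_pair (a b : 'I_m) r : a <= b -> sigma a < bound -> sigma b < bound ->
    run_of s a <= r < run_of s b -> j <= (r - run_of s t) + (run_of s t - r) ->
    j <= (r.+1 - run_of s t) + (run_of s t - r.+1) -> False.
  move=> Hab Ha Hb /andP [Har Hrb] Hd1 Hd2.
  have [c1 [Hac1 Hc1b E1]] := run_of_ivt Hab (introT andP (conj Har (ltnW Hrb))).
  have [c2 [Hac2 Hc2b E2]] := run_of_ivt Hab (introT andP (conj (leqW Har) Hrb)).
  have := adjacent_runs_neq (etrans E2 (esym (congr1 S E1))).
  rewrite (in_block c1) ?(in_block c2) ?eqxx // /run_dist ?E1 ?E2 //.
    by apply: (V_convex Hdec Hinc Hac2 Hc2b).
  by apply: (V_convex Hdec Hinc Hac1 Hc1b).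
have Ht : sigma t < bound by rewrite sigma_t (leq_ltn_trans _ Hhi).
have := far i Hlo; rewrite leq_eqVlt => /orP [/eqP <- //|Hfar]; exfalso.
case: (leqP (run_of s t) (run_of s i)) => Hti.
  have Hti' : run_of s t < run_of s i by move: Hfar; rewrite /run_dist; lia.
  apply: (adjacent_pair t i (run_of s t + j) (ltnW (run_of_lt Hti')) Ht Hhi);
    by move: Hfar; rewrite /run_dist; lia.
apply: (adjacent_pair i t (run_of s t - j.+1) (ltnW (run_of_lt Hti)) Hhi Ht);
  by move: Hfar; rewrite /run_dist; lia.
Qed.

Lemma card_block j : j <= k -> #|block j| = p j.
Proof.
move=> /Hblocks [Hm _].
have -> : block j = read_before (start j + p j) :\: read_before (start j).
  by apply/setP => i; rewrite !inE -leqNgt andbC.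
rewrite cardsD (setIidPr _); last first.
  by apply/subsetP => i; rewrite !inE => /leq_trans; apply; rewrite leq_addr.
by rewrite !card_perm_lt ?addKn // (leq_trans (leq_addr _ _) Hm).
Qed.

Lemma block_sub_run_dist j : j <= k -> read_before (start j) = within j ->
  block j \subset [set i : 'I_m | dist i == j].
Proof. by move=> Hj Hread; apply/subsetP => i Hi; rewrite inE (run_dist_block Hj Hread Hi). Qed.

Lemma Xrun_center : 0 < p 0 -> Xrun X s (run_of s t).
Proof.
move=> Hp; apply: Xrun_run_of.
by rewrite (letter_in_block (j := 0)) // inE sigma_t /block_start big_ord0.
Qed.

(* Induction on the blocks: as long as the block lengths follow the greedy
   profile, block j is read exactly at run distance j from t, hence has length
   e_{run_of t}^{(j)}, which is itself bounded by the greedy profile. *)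
Lemma blocks_le_greedy_max_center : 0 < p 0 ->
  (forall j, j < k -> p j = greedy_max X s j) -> p k <= greedy_max X s k.
Proof.
move=> Hp0 Hgreedy.
have Hx := Xrun_center Hp0; have Hsig := sig_run_of_gt0 s t.
have block_le_e j : j <= k -> read_before (start j) = within j -> p j <= e_ s (run_of s t) j.
  by move=> Hj Hread; rewrite -card_block // -card_run_dist_eq subset_leq_card // block_sub_run_dist.
have Hinv j : j <= k -> read_before (start j) = within j /\
    forall j', j' < j -> p j' = e_ s (run_of s t) j'.
  elim: j => [|j IH] Hj.
    by split => //; apply/setP => i; rewrite !inE /block_start big_ord0.
  have [Hread Hpre] := IH (ltnW Hj).
  have Hpj : p j = e_ s (run_of s t) j.
    apply/eqP; rewrite eqn_leq block_le_e ?(ltnW Hj) //= Hgreedy //.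
    by apply: e_le_greedy_max_of_prefix => // j' Hj'; rewrite -Hpre // Hgreedy // (ltn_trans Hj').
  have Hblock : block j = [set i : 'I_m | dist i == j].
    apply/eqP; rewrite eqEcard block_sub_run_dist ?(ltnW Hj) //=.
    by rewrite card_run_dist_eq card_block ?(ltnW Hj) // Hpj.
  split => [|j']; last by rewrite ltnS leq_eqVlt => /orP [/eqP ->|/Hpre].
  apply/setP => i; move/setP/(_ i): Hblock; move/setP/(_ i): Hread.
  by rewrite !inE block_startS; lia.
have [Hread Hpre] := Hinv k (leqnn k).
apply: leq_trans (block_le_e k (leqnn k) Hread) _.
by apply: e_le_greedy_max_of_prefix => // j Hj; rewrite -Hpre // Hgreedy.
Qed.

End UpperBound.

Lemma no_X_letters X m (s : sequence m) : greedy_max X s 0 = 0 -> forall i, s i = other X.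
Proof.
move=> H0 i; have [Hi|Hi] := eqVneq (s i) X.
  have := sig_le_greedy_max0 (Xrun_run_of Hi).
  by rewrite H0 leqn0 (negbTE (lt0n_neq0 (sig_run_of_gt0 s i))).
by move: Hi; clear H0; case: (s i); case: X.
Qed.

Lemma runs_nseq (Y : letter) n : runs (nseq n.+1 Y) = [:: (Y, n.+1)].
Proof. by elim: n => [|n IH] //; rewrite [nseq _ _]/= runs_cons IH eqxx. Qed.

Lemma spectrum_const Y n (s : sequence n.+1) : (forall i, s i = Y) ->
  spectrum s = if Y is A then [:: n.+1; 0] else [:: 0; n.+1].
Proof.
move=> H; have -> : spectrum s = spectrum_list (nseq n.+1 Y).
  congr spectrum_list; apply: (@eq_from_nth _ A); first by rewrite size_map size_enum_ord size_nseq.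
  move=> i; rewrite size_map size_enum_ord => Hi.
  by rewrite (nth_map (Ordinal Hi)) ?size_enum_ord // H nth_nseq Hi.
have Hlast : last Y (nseq n Y) = Y by elim: n {s H}.
by rewrite /spectrum_list runs_nseq (_ : nseq n.+1 Y = Y :: nseq n Y) //= Hlast; case: Y {H Hlast}.
Qed.

(* Without X's, the greedy profile reads one empty X-block followed by the whole word. *)
Lemma greedy_max_no_X X n (s : sequence n.+1) : greedy_max X s 0 = 0 ->
  greedy_max X s 1 = n.+1 /\ forall j, greedy_max X s j.+2 = 0.
Proof.
move=> H0; have Hs := spectrum_const (no_X_letters H0).
have [H1 H2] : greedy_max X s 1 = n.+1 /\ greedy_max X s 2 = 0.
  rewrite /greedy_max /= /I1 /m1 /idx /e_ /sig Hs.
  by case: X {H0 Hs} => /=; rewrite !unlock /= ?addn0 ?add0n ?maxn0 eqxx /= ?unlock.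
split => //; elim=> [//|j IH].
by rewrite greedy_maxS greedy_set_eq0 // big_nil.
Qed.

Lemma blocks_le_greedy_max X m (s : sequence m) (sigma : 'S_m) p k :
  inT sigma -> blocks X (Defs.act sigma s) p k.+1 ->
  (forall j, j < k -> p j = greedy_max X s j) -> p k <= greedy_max X s k.
Proof.
move=> [t [Ht Hdec Hinc]] Hblocks Hgreedy.
have [Hp0|Hp0] := posnP (p 0); last exact: (blocks_le_greedy_max_center Ht Hdec Hinc Hblocks).
case: k Hblocks Hgreedy => [|k] Hblocks Hgreedy; first by rewrite Hp0.
have H0 : greedy_max X s 0 = 0 by rewrite -Hgreedy.
case: m s sigma t {Ht Hdec Hinc} Hblocks Hgreedy H0 => [|n] s sigma [] // _ _ Hblocks Hgreedy H0.
have [H1 H2] := greedy_max_no_X H0.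
have [Hk _] := Hblocks k.+1 (ltnSn _).
case: k Hk Hblocks Hgreedy => [|k] Hk Hblocks Hgreedy.
  by rewrite H1 (leq_trans (leq_addl _ _) Hk).
have Hn : n.+1 <= block_start p k.+2.
  rewrite -H1 -Hgreedy // (leq_trans _ (leq_block_start p (_ : 2 <= k.+2))) //.
  by rewrite block_startS leq_addl.
by rewrite H2; move: Hk Hn; lia.
Qed.

Section Reading.
Variables (m : nat) (s : sequence m) (l : nat).
Hypothesis Hl : 0 < sig s l.

Local Notation dist := (run_dist s l).

Lemma exists_pos_in_run : exists n, (n < m) && (run_of s n == l).
Proof. by have /sig_gt0P [i Hi] := Hl; exists i; rewrite ltn_ord Hi eqxx. Qed.

Definition first_pos : nat := ex_minn exists_pos_in_run.

Lemma first_posP :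
  [/\ first_pos < m, run_of s first_pos = l & forall i, i < m -> run_of s i = l -> first_pos <= i].
Proof.
rewrite /first_pos; case: ex_minnP => n /andP [Hn /eqP Hrun] Hmin.
by split => // i Hi Hri; apply: Hmin; rewrite Hi Hri eqxx.
Qed.

Definition t0 : 'I_m := Ordinal (let: And3 H _ _ := first_posP in H).

Lemma run_of_t0 : run_of s t0 = l.
Proof. by case: first_posP. Qed.

Lemma t0_min (i : 'I_m) : run_of s i = l -> t0 <= i.
Proof. by case: first_posP => _ _; apply. Qed.

Lemma run_of_lt_t0 (i : 'I_m) : i < t0 -> run_of s i < l.
Proof.
move=> H; rewrite ltn_neqAle -{2}run_of_t0 (run_of_le s (ltnW H)) // andbT.
by apply: contraTneq H => /t0_min; rewrite -leqNgt.
Qed.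

Lemma run_of_ge_t0 (i : 'I_m) : t0 <= i -> l <= run_of s i.
Proof. by move=> H; rewrite -run_of_t0 run_of_le. Qed.

(* Positions are read by increasing run distance from l; within one distance,
   first those right of t0 from left to right, then those left of it from
   right to left, so that the reading order is V-shaped. *)
Definition side_rank (i : 'I_m) : nat := if i < t0 then m.-1 - i else m + i.
Definition reading_key (i : 'I_m) : nat := dist i * (2 * m) + side_rank i.

Lemma reading_key_lt i j : dist i < dist j -> reading_key i < reading_key j.
Proof.
have side_lt (k : 'I_m) : side_rank k < 2 * m.
  by rewrite /side_rank; case: ifP => _; have := ltn_ord k; lia.
move=> H; apply: leq_trans (_ : (dist i).+1 * (2 * m) <= _).
  by rewrite /reading_key mulSn [X in _ < X]addnC ltn_add2l.
exact: leq_trans (leq_mul H (leqnn _)) (leq_addr _ _).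
Qed.

Lemma reading_key_inj : injective reading_key.
Proof.
move=> i j E.
have Ed : dist i = dist j.
  by case: (ltngtP (dist i) (dist j)) => // /reading_key_lt; rewrite E ltnn.
move: E; rewrite /reading_key Ed => /addnI; rewrite /side_rank.
have Hi := ltn_ord i; have Hj := ltn_ord j.
by case: ifP => Hit; case: ifP => Hjt E; apply: val_inj; move: E Hit Hjt => /=; lia.
Qed.

Definition reading_rank (i : 'I_m) : nat := #|[set j | reading_key j < reading_key i]|.

Lemma reading_rank_lt i : reading_rank i < m.
Proof.
have : [set j | reading_key j < reading_key i] \subset [set~ i].
  by apply/subsetP => j; rewrite !inE; apply: contraTneq => ->; rewrite ltnn.
move/subset_leq_card; rewrite cardsC1 card_ord => /leq_ltn_trans; apply.
by case: m i => [[]|].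
Qed.

Lemma reading_rank_mono i j : reading_key i < reading_key j -> reading_rank i < reading_rank j.
Proof.
move=> H; apply: proper_card; rewrite properE; apply/andP; split.
  by apply/subsetP => x; rewrite !inE => /ltn_trans; apply.
by apply/subsetPn; exists i; rewrite !inE ?ltnn.
Qed.

Lemma reading_rank_inj : injective (fun i => Ordinal (reading_rank_lt i)).
Proof.
move=> i j /(congr1 val) /= E; apply: reading_key_inj.
by case: (ltngtP (reading_key i) (reading_key j)) => // /reading_rank_mono; rewrite E ltnn.
Qed.

Definition reading_perm : 'S_m := perm reading_rank_inj.

Lemma reading_permE i : nat_of_ord (reading_perm i) = reading_rank i.
Proof. by rewrite permE. Qed.

Lemma reading_perm_t0 : nat_of_ord (reading_perm t0) = 0.
Proof.
rewrite reading_permE; apply/eqP; rewrite cards_eq0; apply/eqP/setP => j; rewrite !inE.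
apply/negbTE; rewrite -leqNgt.
have [Hj|Hj] := posnP (dist j); last by apply/ltnW/reading_key_lt; rewrite /run_dist run_of_t0 subnn.
have Ej : run_of s j = l by move: Hj; rewrite /run_dist; lia.
rewrite /reading_key Hj /run_dist run_of_t0 subnn !mul0n !add0n /side_rank ltnn.
by rewrite ltnNge t0_min //= leq_add2l t0_min.
Qed.

Lemma reading_perm_dec (i j : 'I_m) : i < j -> j <= t0 -> reading_perm j < reading_perm i.
Proof.
move=> Hij Hjt; rewrite !reading_permE; apply: reading_rank_mono.
have Hi := run_of_lt_t0 (leq_trans Hij Hjt); have Hmono := run_of_le s (ltnW Hij) (ltn_ord j).
move: Hjt; rewrite leq_eqVlt => /orP [/eqP Ejt|Hjt].
  by apply: reading_key_lt; rewrite /run_dist (_ : j = t0) ?run_of_t0; [lia | apply: val_inj].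
have Hj := run_of_lt_t0 Hjt.
case: (ltngtP (dist j) (dist i)) => [/reading_key_lt //|H|H]; first by move: H; rewrite /run_dist; lia.
rewrite /reading_key H ltn_add2l /side_rank Hjt (ltn_trans Hij Hjt).
by have := ltn_ord j; lia.
Qed.

Lemma reading_perm_inc (i j : 'I_m) : t0 <= i -> i < j -> reading_perm i < reading_perm j.
Proof.
move=> Hti Hij; rewrite !reading_permE; apply: reading_rank_mono.
have Hi := run_of_ge_t0 Hti; have Hmono := run_of_le s (ltnW Hij) (ltn_ord j).
case: (ltngtP (dist i) (dist j)) => [/reading_key_lt //|H|H]; first by move: H; rewrite /run_dist; lia.
rewrite /reading_key H ltn_add2l /side_rank !ltnNge Hti (leq_trans Hti (ltnW Hij)) /=.
by rewrite -ltnNge ltn_add2l.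
Qed.

Lemma reading_perm_inT : inT reading_perm.
Proof.
by exists t0; split; [exact: reading_perm_t0 | exact: reading_perm_dec | exact: reading_perm_inc].
Qed.

Lemma reading_perm_bounds i :
  block_start (e_ s l) (dist i) <= reading_perm i < block_start (e_ s l) (dist i).+1.
Proof.
rewrite reading_permE -!card_run_dist_lt /reading_rank; apply/andP; split.
  by apply: subset_leq_card; apply/subsetP => j; rewrite !inE => /reading_key_lt.
apply: proper_card; rewrite properE; apply/andP; split.
  apply/subsetP => j; rewrite !inE ltnS => Hk; rewrite leqNgt; apply/negP => /reading_key_lt.
  by rewrite ltnNge (ltnW Hk).
by apply/subsetPn; exists i; rewrite !inE ?ltnn.
Qed.

Lemma reading_perm_blocks X : odd l = parity_of X ->
  forall K, blocks X (Defs.act reading_perm s) (e_ s l) K.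
Proof.
move=> Hpar K j _; split.
  by rewrite -block_startS -card_run_dist_lt (leq_trans (max_card _)) ?card_ord.
move=> q; have [i ->] : exists i, q = reading_perm i by exists (reading_perm^-1 q)%g; rewrite permKV.
move=> Hq; rewrite act_perm; suff <- : dist i = j by apply: block_letter_run_dist.
have /andP [H1 H2] := reading_perm_bounds i.
move: Hq; rewrite -block_startS => /andP [H3 H4].
case: (ltngtP (dist i) j) => // H.
  by have := leq_block_start (e_ s l) H; move: H2 H3; lia.
by have := leq_block_start (e_ s l) H; move: H1 H4; lia.
Qed.

End Reading.

Lemma eq_blocks X m (u u' : sequence m) p p' k :
  u =1 u' -> p =1 p' -> blocks X u p k -> blocks X u' p' k.
Proof.
move=> Eu Ep Hu j /Hu [H1 H2].
have Es : block_start p j = block_start p' j by apply: eq_bigr => i _; rewrite Ep.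
by rewrite -Es -Ep; split => // i /H2; rewrite Eu.
Qed.

Lemma mI_spectrum X m (s s' : sequence m) : spectrum s = spectrum s' ->
  forall k, mI X s k = mI X s' k.
Proof.
move=> Es; elim=> [|k IH]; first by rewrite /mI /I1 /m1 /idx /sig Es.
by rewrite [mI X s k.+1]/= [mI X s' k.+1]/= IH /e_ /sig Es.
Qed.

Lemma identity_inT m : 0 < m -> inT (1%g : 'S_m).
Proof.
case: m => // n _; exists ord0; split; first by rewrite perm1.
  by move=> i j Hij; rewrite leqn0 => /eqP Hj; move: Hij; rewrite Hj.
by move=> i j _ Hij; rewrite !perm1.
Qed.

Lemma exists_greedy_reading X m (s : sequence m) : 0 < m ->
  exists2 sigma, inT sigma & forall K, blocks X (Defs.act sigma s) (greedy_max X s) K.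
Proof.
move=> Hm; have [H0|H0] := posnP (greedy_max X s 0); last first.
  have [l Hx Hl] := greedy_profile_attained H0.
  have Hsig : 0 < sig s l by rewrite -[sig s l]/(e_ s l 0) Hl.
  exists (reading_perm Hsig); first exact: reading_perm_inT.
  have Hpar : odd l = parity_of X by case/andP: Hx => _ /eqP.
  by move=> K; apply: (eq_blocks (frefl _) Hl); apply: reading_perm_blocks.
case: m s Hm H0 => // n s _ H0; have [H1 H2] := greedy_max_no_X H0.
exists 1%g; first exact: identity_inT.
have Hstart j : block_start (greedy_max X s) j.+2 = n.+1.
  elim: j => [|j IH]; first by rewrite !block_startS /block_start big_ord0 H0 H1.
  by rewrite block_startS IH H2 addn0.
move=> K [|[|j]] _; rewrite ?Hstart ?H2 ?addn0; split => //.
- by rewrite /block_start big_ord0 H0.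
- by move=> i; rewrite /block_start big_ord0 H0 ltn0 andbF.
- by rewrite block_startS /block_start big_ord0 H0 H1.
- by move=> i _; rewrite /Defs.act invg1 perm1 (no_X_letters H0).
- by move=> i /andP [Hni]; rewrite ltnS leqNgt Hni.
Qed.

Lemma greedy_max_le_of_readings X m (s s' : sequence m) k : 0 < m ->
  (forall sigma, inT sigma -> exists2 sigma', inT sigma' & Defs.act sigma s =1 Defs.act sigma' s') ->
  (forall j, j < k -> greedy_max X s j = greedy_max X s' j) -> greedy_max X s k <= greedy_max X s' k.
Proof.
move=> Hm Hreadings Hprefix.
have [sigma Hsigma Hblocks] := exists_greedy_reading X s Hm.
have [sigma' Hsigma' E] := Hreadings sigma Hsigma.
exact: blocks_le_greedy_max Hsigma' (eq_blocks E (frefl _) (Hblocks k.+1)) Hprefix.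
Qed.

Lemma mirrored_greedy_max X m (s s' : sequence m) :
  mirrored s s' -> greedy_max X s =1 greedy_max X s'.
Proof.
move=> [Hss' Hs's]; have [Hm0|Hm] := posnP m.
  suff Es : spectrum s = spectrum s' by move=> k; rewrite /greedy_max (mI_spectrum X Es).
  by rewrite /spectrum; case: m s s' {Hss' Hs's} Hm0 => // s s' _; rewrite enum_ord0.
elim/ltn_ind => k IH; apply/eqP; rewrite eqn_leq !greedy_max_le_of_readings //.
by move=> j /IH.
Qed.

Theorem mainTheorem15 (m : nat) (s s' : sequence m) :
  ((exists i : nat, 1 <= i /\ mX A s i <> mX A s' i) -> ~ mirrored s s') /\
  ((exists i : nat, 1 <= i /\ mX B s i <> mX B s' i) -> ~ mirrored s s').
Proof.
by split=> -[i [_ Hi]] /mirrored_greedy_max E; apply: Hi; apply: E.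
Qed.
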